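(* Consider the (1+1) EA maximizing $\mathrm{OneMax}$ on $\{0,1\}^n$, and let $V_t$ be the $\mathrm{OneMax}$ value (number of $1$s) of its current search point after $t$ iterations. Then, as $n\to\infty$, \[ \mathbb{E}[V_t]\ \ge\ \begin{cases}\dfrac n2+\dfrac{t}{2\sqrt e}-O(1), & \text{if } t=O(\sqrt n),\\[2mm] \dfrac n2+\dfrac{t}{2\sqrt e}(1-o(1)), &\text{if } t=o(n).\end{cases} \] Furthermore, for all $t\ge0$, $\mathbb{E}[V_t]\ge n\bigl(1-\exp(-t/(en))/2\bigr)$.
   Context: $\mathrm{OneMax}(x)=\sum_{i=1}^n x_i$ for $x\in\{0,1\}^n$. The (1+1) EA maximizing $f\colon\{0,1\}^n\to\mathbb{R}$: choose $x\in\{0,1\}^n$ uniformly at random; then repeatedly (one iteration) create $y$ from $x$ by flipping each bit independently with probability $1/n$, and replace $x$ by $y$ if $f(y)\ge f(x)$; the algorithm stops once the optimum is reached (the search point then stays at the optimum). Asymptotic notation refers to $n\to\infty$. *)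

From HB Require Import structures.
From mathcomp Require Import all_boot all_order all_algebra.
From mathcomp Require Import all_classical all_reals all_analysis.
Set Implicit Arguments. Unset Strict Implicit. Unset Printing Implicit Defensive.
Import Order.TTheory GRing.Theory Num.Theory.
Local Open Scope ring_scope.

Definition bits (n : nat) := {ffun 'I_n -> bool}.

Definition onemax (n : nat) (x : bits n) : nat := (\sum_(i < n) x i)%N.

Definition hamming (n : nat) (x y : bits n) : nat := #|[set i | x i != y i]|.

(* probability that standard bit mutation (rate 1/n) turns x into y *)
Definition mutprob (R : realType) (n : nat) (x y : bits n) : R :=
  (n%:R^-1) ^+ (hamming x y) * (1 - n%:R^-1) ^+ (n - hamming x y).

(* one iteration of the (1+1) EA on OneMax, acting on distributions:
   from x, mutate to z; the new point is z if OneMax z >= OneMax x, else x. *)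
Definition ea_step (R : realType) (n : nat) (p : bits n -> R) : bits n -> R :=
  fun y => \sum_(x : bits n) p x *
    \sum_(z : bits n) @mutprob R n x z *
      (if (if (onemax x <= onemax z)%N then z else x) == y then 1 else 0).

Definition ea_dist (R : realType) (n t : nat) : bits n -> R :=
  iter t (@ea_step R n) (fun _ => ((2 ^ n)%N%:R)^-1).

Definition expected_onemax (R : realType) (n t : nat) : R :=
  \sum_(x : bits n) @ea_dist R n t x * (onemax x)%:R.

From mathcomp Require Import all_boot all_order all_algebra.
From mathcomp Require Import all_classical all_reals all_analysis.
From mathcomp Require Import lra ring zify.
Set Implicit Arguments. Unset Strict Implicit. Unset Printing Implicit Defensive.
Import Order.TTheory GRing.Theory Num.Theory.
Local Open Scope classical_set_scope.
Local Open Scope ring_scope.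

(* One iteration from a point with k one-bits gains in expectation at least
   phi(k) = (n - k)/n (1 - 1/n)^k: keep every one-bit and count the flipped
   zero-bits.  Any affine minorant a - b k of phi on [0, n] therefore gives the
   linear recurrence E[V_(t+1)] >= E[V_t] + a - b E[V_t].  The tangent of phi at
   n/2 has value about 1/(2 sqrt e) and slope O(1/n); from E[V_0] = n/2 it yields
   E[V_t] >= n/2 + t/(2 sqrt e) - O(t^2/n), whence the first two bounds.  The
   minorant phi(k) >= (n - k)/(e n) makes n - E[V_t] decay geometrically with
   ratio 1 - 1/(e n). *)

(* (1 - 1/n)^k / n is the probability of flipping a given zero-bit and no one-bit. *)
Definition drift_lb (R : realType) (n k : nat) : R :=
  (n - k)%:R * ((n%:R)^-1 * (1 - (n%:R)^-1) ^+ k).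

Section Onemax.
Variable n : nat.

Lemma onemax_card (x : bits n) : onemax x = #|[pred i | x i]|.
Proof.
rewrite /onemax (bigID (fun i => x i)) /= [X in (_ + X)%N]big1 ?addn0.
  by rewrite -sum1_card; apply: eq_bigr => i ->.
by move=> i /negbTE ->.
Qed.

Lemma subn_onemax (x : bits n) : (n - onemax x)%N = #|[pred i | ~~ x i]|.
Proof.
have cardC1 := cardC [pred i | x i]; rewrite card_ord in cardC1.
by rewrite onemax_card -{1}cardC1 addKn; apply: eq_card.
Qed.

Lemma onemax_le (x : bits n) : (onemax x <= n)%N.
Proof. by rewrite onemax_card; apply: leq_trans (max_card _) _; rewrite card_ord. Qed.

Lemma onemax_negb (x : bits n) : onemax [ffun i => ~~ x i] = (n - onemax x)%N.
Proof. by rewrite subn_onemax onemax_card; apply: eq_card => i; rewrite !inE ffunE. Qed.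

Lemma card_bits : #|{: bits n}| = (2 ^ n)%N.
Proof. by rewrite card_ffun card_bool card_ord. Qed.

End Onemax.

Section Mutation.
Variables (R : realType) (n : nat).
Local Notation q := (1 - (n%:R : R)^-1).

Lemma mutprobE (x z : bits n) :
  mutprob R x z = \prod_i (if x i == z i then q else (n%:R : R)^-1).
Proof.
rewrite (bigID (fun i => x i != z i)) /=.
rewrite (eq_bigr (fun=> (n%:R : R)^-1)); last by move=> i /negbTE ->.
rewrite [X in _ * X](eq_bigr (fun=> q)); last by move=> i; rewrite negbK => ->.
rewrite !prodr_const /mutprob /hamming cardsE; congr (_ * _ ^+ _).
have cardC1 := cardC [pred i | x i != z i]; rewrite card_ord in cardC1.
by rewrite -{1}cardC1 addKn; apply: eq_card.
Qed.

Lemma sum_bits_prod (G : 'I_n -> bool -> R) :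
  \sum_(z : bits n) \prod_i G i (z i) = \prod_i (G i true + G i false).
Proof. by rewrite -bigA_distr_bigA /=; apply: eq_bigr => i _; rewrite big_bool. Qed.

Lemma sum_mutprob (x : bits n) : \sum_z mutprob R x z = 1.
Proof.
under eq_bigr do rewrite mutprobE.
rewrite (sum_bits_prod (fun i b => if x i == b then q else (n%:R : R)^-1)).
by apply: big1 => i _; case: (x i); rewrite /= ?subrK // addrC subrK.
Qed.

Lemma mutprob_ge0 (x z : bits n) : 0 <= mutprob R x z.
Proof.
have inv_le1 : (n%:R : R)^-1 <= 1.
  by case: (n) => [|k]; rewrite ?invr0 // invf_le1 // ler1n.
rewrite mutprobE; apply: prodr_ge0 => i _.
by case: ifP => _; rewrite ?subr_ge0 // invr_ge0.
Qed.

End Mutation.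

Section Dynamics.
Variables (R : realType) (n : nat).
Local Notation q := (1 - (n%:R : R)^-1).
Local Notation E := (expected_onemax R n).

Lemma ea_distS t : @ea_dist R n t.+1 = ea_step (@ea_dist R n t).
Proof. exact: iterS. Qed.

Lemma ea_dist_ge0 t x : 0 <= @ea_dist R n t x.
Proof.
elim: t x => [|t IH] x; first by rewrite /ea_dist /= invr_ge0 ler0n.
rewrite ea_distS; apply: sumr_ge0 => y _; apply: mulr_ge0 => //.
apply: sumr_ge0 => z _; apply: mulr_ge0; first exact: mutprob_ge0.
by case: ifP.
Qed.

Lemma sum_indicator (T : finType) (a : T) (f : T -> R) :
  \sum_y (if a == y then 1 else 0) * f y = f a.
Proof.
rewrite (bigD1 a) //= eqxx mul1r big1 ?addr0 // => y /negbTE.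
by rewrite eq_sym => ->; rewrite mul0r.
Qed.

Lemma sum_ea_step (p : bits n -> R) : \sum_y ea_step p y = \sum_x p x.
Proof.
have sum_indicator1 (a : bits n) : \sum_y (if a == y then 1 else 0) = 1 :> R.
  by rewrite (bigD1 a) //= eqxx big1 ?addr0 // => y /negbTE; rewrite eq_sym => ->.
rewrite /ea_step exchange_big /=; apply: eq_bigr => x _.
rewrite -mulr_sumr exchange_big /=.
under eq_bigr do rewrite -mulr_sumr sum_indicator1 mulr1.
by rewrite sum_mutprob mulr1.
Qed.

Lemma sum_ea_dist t : \sum_x @ea_dist R n t x = 1.
Proof.
elim: t => [|t IH]; last by rewrite ea_distS sum_ea_step.
rewrite /ea_dist /= sumr_const card_bits -(mulr_natl (((2 ^ n)%N%:R : R)^-1)).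
by rewrite mulfV // pnatr_eq0 expn_eq0.
Qed.

Lemma sum_onemax : \sum_(x : bits n) ((onemax x)%:R : R) = n%:R * (2 ^ n)%N%:R / 2.
Proof.
have negb_inj : injective (fun x : bits n => [ffun i => ~~ x i]).
  by apply: (can_inj (g := fun x : bits n => [ffun i => ~~ x i])) => x;
     apply/ffunP => i; rewrite !ffunE negbK.
have sym : \sum_(x : bits n) ((onemax x)%:R : R)
         = \sum_(x : bits n) (n%:R - (onemax x)%:R).
  rewrite (reindex_inj negb_inj) /=; apply: eq_bigr => x _.
  by rewrite onemax_negb natrB ?onemax_le.
rewrite sumrB sumr_const card_bits -mulr_natl in sym.
apply: (canRL (mulfK _)); first by rewrite pnatr_eq0.
by rewrite mulr_natr mulr2n mulrDr mulr1 {1}sym subrK mulr1.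
Qed.

Lemma expected_onemax0 : E 0 = n%:R / 2.
Proof.
rewrite /expected_onemax /ea_dist /= -mulr_sumr sum_onemax.
have h : ((2 ^ n)%N%:R : R) != 0 by rewrite pnatr_eq0 expn_eq0.
by field; rewrite h /= ?pnatr_eq0.
Qed.

Definition improvement (x z : bits n) : nat := (onemax z - onemax x)%N.

Definition drift (x : bits n) : R := \sum_z mutprob R x z * (improvement x z)%:R.

Lemma sum_ea_step_onemax (p : bits n -> R) :
  \sum_y ea_step p y * (onemax y)%:R = \sum_x p x * ((onemax x)%:R + drift x).
Proof.
have accepted z x : ((onemax (if (onemax x <= onemax z)%N then z else x))%:R : R)
    = (onemax x)%:R + (improvement x z)%:R.
  rewrite /improvement -natrD; case: leqP => h; first by rewrite subnKC.
  by move/ltnW: h; rewrite -subn_eq0 => /eqP ->; rewrite addn0.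
rewrite /ea_step; under eq_bigr do rewrite mulr_suml.
rewrite exchange_big /=; apply: eq_bigr => x _.
under eq_bigr do rewrite -mulrA mulr_suml.
rewrite -mulr_sumr exchange_big /=; congr (_ * _).
under eq_bigr do (under eq_bigr do rewrite -mulrA; rewrite -mulr_sumr sum_indicator).
under eq_bigr do rewrite accepted mulrDr.
by rewrite big_split /= -mulr_suml sum_mutprob mul1r.
Qed.

(* The product is the indicator that [z] keeps every one-bit of [x]; on that event
   the improvement is the number of flipped zero-bits. *)
Lemma flipped_zeros_le_improvement (x z : bits n) :
  (\prod_(j | x j) ((z j : nat)%:R : R)) * \sum_(i | ~~ x i) ((z i : nat)%:R)
  <= (improvement x z)%:R.
Proof.
case: (boolP [forall j, x j ==> z j]) => [/forallP keep | /forallPn [j]].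
  rewrite big1 ?mul1r; last by move=> j xj; move: (keep j); rewrite xj /= => ->.
  rewrite -natr_sum ler_nat /improvement.
  have -> : onemax z = (\sum_(i | x i) z i + \sum_(i | ~~ x i) z i)%N.
    by rewrite /onemax (bigID (fun i => x i)).
  have -> : onemax x = (\sum_(i | x i) z i)%N.
    rewrite onemax_card -sum1_card; apply: eq_big => // i; rewrite ?inE /= => xi.
    by move: (keep i); rewrite xi /= => ->.
  by rewrite addKn.
by rewrite negb_imply => /andP [xj zj]; rewrite (bigD1 j) //= (negbTE zj) !mul0r.
Qed.

Lemma sum_mutprob_keep_ones_flip (x : bits n) (i : 'I_n) : ~~ x i ->
  \sum_z mutprob R x z * (\prod_(j | x j) ((z j : nat)%:R : R)) * (z i : nat)%:R
  = (n%:R : R)^-1 * q ^+ onemax x.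
Proof.
move=> xi.
pose G j (b : bool) := (if x j == b then q else (n%:R : R)^-1) *
   (if x j then (b : nat)%:R else 1) * (if j == i then (b : nat)%:R else 1).
have factor z : mutprob R x z * (\prod_(j | x j) ((z j : nat)%:R : R))
    * (z i : nat)%:R = \prod_j G j (z j).
  rewrite /G !big_split /= mutprobE -big_mkcond; congr (_ * _).
  by rewrite -big_mkcond /= big_pred1_eq.
under eq_bigr do rewrite factor.
rewrite sum_bits_prod (eq_bigr (fun j => if x j then q
                                 else if j == i then (n%:R : R)^-1 else 1)); last first.
  move=> j _; rewrite /G; case: (boolP (x j)) => xj /=.
    have -> : (j == i) = false by apply/eqP => ji; move: xi; rewrite -ji xj.
    by rewrite !mulr1 mulr0 addr0.
  by case: (j == i); rewrite /= !mulr1 ?mulr0 ?addr0 ?add0r // addrC subrK.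
rewrite (bigID (fun j => x j)) /= mulrC; congr (_ * _).
  rewrite (bigD1 i) //= eqxx (negbTE xi) big1 ?mulr1 //.
  by move=> j /andP [/negbTE -> /negbTE ->].
by rewrite (eq_bigr (fun=> q)) ?prodr_const ?onemax_card // => j ->.
Qed.

Lemma drift_lb_le_drift (x : bits n) : drift_lb R n (onemax x) <= drift x.
Proof.
apply: (@le_trans _ _ (\sum_z mutprob R x z * ((\prod_(j | x j) ((z j : nat)%:R : R))
                                       * \sum_(i | ~~ x i) ((z i : nat)%:R)))).
  under eq_bigr do rewrite mulrA mulr_sumr.
  rewrite exchange_big /= (eq_bigr (fun=> (n%:R : R)^-1 * q ^+ onemax x)).
    by rewrite sumr_const /drift_lb subn_onemax mulr_natl.
  by move=> i xi; rewrite sum_mutprob_keep_ones_flip.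
apply: ler_sum => z _; apply: ler_wpM2l; first exact: mutprob_ge0.
exact: flipped_zeros_le_improvement.
Qed.

Lemma expected_onemaxS_ge (a b : R) t :
  (forall k, (k <= n)%N -> a - b * k%:R <= drift_lb R n k) ->
  E t + (a - b * E t) <= E t.+1.
Proof.
move=> affine_le.
have -> : a - b * E t = \sum_x @ea_dist R n t x * (a - b * (onemax x)%:R).
  under [RHS]eq_bigr do rewrite mulrBr mulrCA.
  by rewrite sumrB -mulr_suml -mulr_sumr sum_ea_dist mul1r.
rewrite /expected_onemax ea_distS sum_ea_step_onemax -big_split /=.
apply: ler_sum => x _; rewrite -mulrDr ler_wpM2l ?ea_dist_ge0 // lerD2l.
exact: le_trans (affine_le _ (onemax_le x)) (drift_lb_le_drift x).
Qed.

End Dynamics.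

Lemma bernoulli_ineq (R : realDomainType) (u : R) (j : nat) :
  0 <= u <= 1 -> 1 - j%:R * u <= (1 - u) ^+ j.
Proof.
case/andP => u0 u1; elim: j => [|j IH]; first by rewrite mul0r subr0 expr0.
rewrite exprS; apply: le_trans (ler_wpM2l _ IH); last by rewrite subr_ge0.
by rewrite -natr1; have := mulr_ge0 (ler0n R j) (mulr_ge0 u0 u0); lra.
Qed.

Section Exponential.
Variable R : realType.

Lemma expRN_le_1B (u : R) : 0 <= u < 1 -> expR (- (u / (1 - u))) <= 1 - u.
Proof.
case/andP => u0 u1; have v0 : 0 < 1 - u by rewrite subr_gt0.
have inv_1B : 1 - u = (1 + u / (1 - u))^-1.
  by field; rewrite lt0r_neq0 //= subrK oner_neq0.
rewrite [X in _ <= X]inv_1B expRN lef_pV2 ?posrE ?expR_gt0 ?expR_ge1Dx //.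
by have := divr_ge0 u0 (ltW v0); lra.
Qed.

Lemma expR_le_expr_1B (u : R) (j : nat) : 0 <= u < 1 ->
  expR (- (j%:R * (u / (1 - u)))) <= (1 - u) ^+ j.
Proof.
move=> u01; rewrite -mulrN expRM_natl lerXn2r ?nnegrE ?expR_ge0 ?expRN_le_1B //.
by case/andP: u01 => _ u1; rewrite subr_ge0 ltW.
Qed.

Lemma expr_1B_tangent (u : R) (k m : nat) : 0 <= u <= 1 ->
  (1 - u) ^+ m * (1 - (k%:R - m%:R) * u) <= (1 - u) ^+ k.
Proof.
move=> u01; have /andP[u0 u1] := u01.
have q0 : 0 <= 1 - u by rewrite subr_ge0.
case: (leqP m k) => [mk | km].
  rewrite -natrB // -{2}(subnKC mk) exprD ler_wpM2l ?exprn_ge0 //.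
  exact: bernoulli_ineq.
have -> : k%:R - m%:R = - (m - k)%:R :> R by rewrite natrB ?opprB // ltnW.
set d := (m - k)%N.
have -> : (1 - u) ^+ m = (1 - u) ^+ k * (1 - u) ^+ d by rewrite -exprD subnKC // ltnW.
rewrite -mulrA ler_piMr ?exprn_ge0 // mulNr opprK.
have expd : (1 - u) ^+ d <= expR (- (d%:R * u)).
  by rewrite -mulrN expRM_natl lerXn2r ?nnegrE ?expR_ge0 // expR_ge1Dx.
apply: le_trans (ler_pM _ _ expd (expR_ge1Dx (d%:R * u))) _.
- exact: exprn_ge0.
- by rewrite addr_ge0 ?mulr_ge0.
- by rewrite -expRD addNr expR0.
Qed.

End Exponential.

Lemma drift_recurrence_lb (R : realFieldType) (E : nat -> R) (B M c al : R) :
  0 <= al -> al <= 1 -> 0 <= c -> c <= 2 -> M <= B -> B <= E 0 ->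
  (forall t, E t + c - al * (E t - M) <= E t.+1) ->
  forall t, B + t%:R * c - al * t%:R * (B - M) - al * t%:R ^+ 2 <= E t.
Proof.
move=> al0 al1 c0 c2 MB BE step; elim => [|t IH].
  by rewrite expr0n /= !(mul0r, mulr0, subr0, addr0).
apply: le_trans (step t).
have -> : E t + c - al * (E t - M) = (1 - al) * E t + c + al * M by ring.
apply: le_trans (_ : (1 - al) * (B + t%:R * c - al * t%:R * (B - M) - al * t%:R ^+ 2)
                     + c + al * M <= _); last first.
  by rewrite lerD2r lerD2r ler_wpM2l ?subr_ge0.
rewrite -subr_ge0.
have -> : (1 - al) * (B + t%:R * c - al * t%:R * (B - M) - al * t%:R ^+ 2) + c + al * M
    - (B + t.+1%:R * c - al * t.+1%:R * (B - M) - al * t.+1%:R ^+ 2)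
    = al * t%:R * (2 - c) + al ^+ 2 * t%:R * (B - M) + al ^+ 2 * t%:R ^+ 2 + al.
  by rewrite -natr1; ring.
have t0 : 0 <= (t%:R : R) by rewrite ler0n.
by rewrite !addr_ge0 // ?mulr_ge0 ?exprn_ge0 ?subr_ge0.
Qed.

Lemma geometric_recurrence (R : realDomainType) (x : nat -> R) (r : R) :
  r <= 1 -> (forall t, x t.+1 <= x t * (1 - r)) -> forall t, x t <= x 0 * (1 - r) ^+ t.
Proof.
move=> r1 step; elim => [|t IH]; first by rewrite expr0 mulr1.
apply: le_trans (step t) _; rewrite exprSr mulrA.
by rewrite ler_wpM2r ?subr_ge0.
Qed.

Section DriftBounds.
Variables (R : realType) (n : nat).
Hypothesis n0 : (0 < n)%N.
Local Notation N := (n%:R : R).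
Local Notation q := (1 - N^-1).

Let N_gt0 : 0 < N. Proof. by rewrite ltr0n. Qed.

Let invN_01 : 0 <= N^-1 <= 1.
Proof. by rewrite invr_ge0 ltW //= invf_le1 // ler1n. Qed.

(* Up to ln q ~ -1/N this line is the tangent of k |-> q^k (N - k) / N at m;
   the gap is q^m (k - m)^2 / N^2. *)
Lemma drift_lb_ge_tangent (m k : nat) : (k <= n)%N ->
  q ^+ m * ((N - m%:R) / N) - q ^+ m * (2 * N - m%:R) / N / N * (k%:R - m%:R)
  <= drift_lb R n k.
Proof.
move=> kn.
have Nk : 0 <= (N - k%:R) / N by rewrite divr_ge0 ?subr_ge0 ?ler_nat // ltW.
have q0 : 0 <= q by case/andP: invN_01 => _; rewrite subr_ge0.
apply: le_trans (_ : q ^+ m * (1 - (k%:R - m%:R) * N^-1) * ((N - k%:R) / N) <= _).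
  rewrite -subr_ge0.
  have -> : q ^+ m * (1 - (k%:R - m%:R) * N^-1) * ((N - k%:R) / N)
      - (q ^+ m * ((N - m%:R) / N) - q ^+ m * (2 * N - m%:R) / N / N * (k%:R - m%:R))
      = q ^+ m * ((k%:R - m%:R) ^+ 2 / N ^+ 2).
    by field; rewrite lt0r_neq0.
  by rewrite mulr_ge0 ?exprn_ge0 ?divr_ge0 ?sqr_ge0.
have -> : drift_lb R n k = q ^+ k * ((N - k%:R) / N) by rewrite /drift_lb natrB //; ring.
by rewrite ler_wpM2r // expr_1B_tangent.
Qed.

Lemma expRN1_le_expr (k : nat) : (k < n)%N -> expR (-1) <= q ^+ k.
Proof.
case: k => [_ | k kn]; first by rewrite expr0 expR_le1 lerN10.
have N1 : 0 < N - 1 by rewrite subr_gt0 ltr1n (leq_trans _ kn).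
have u01 : 0 <= N^-1 < 1 by rewrite invr_ge0 ltW //= invf_lt1 // ltr1n (leq_trans _ kn).
apply: le_trans (expR_le_expr_1B _ u01); rewrite ler_expR lerN2.
have -> : N^-1 / (1 - N^-1) = (N - 1)^-1 by field; rewrite !lt0r_neq0.
by rewrite ler_pdivrMr // mul1r lerBrDr natr1 ler_nat.
Qed.

Lemma drift_lb_ge_linear (k : nat) : (k <= n)%N ->
  (N - k%:R) / (expR 1 * N) <= drift_lb R n k.
Proof.
rewrite leq_eqVlt => /orP [/eqP -> | kn].
  by rewrite /drift_lb subnn subrr 2!mul0r lexx.
have -> : (N - k%:R) / (expR 1 * N) = (N - k%:R) * (N^-1 * expR (-1)).
  by rewrite expRN; field; rewrite !gt_eqF ?expR_gt0.
rewrite /drift_lb natrB; last exact: ltnW.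
apply: ler_wpM2l; first by rewrite subr_ge0 ler_nat ltnW.
by apply: ler_wpM2l; [rewrite invr_ge0 ler0n | exact: expRN1_le_expr].
Qed.

Lemma expected_onemax_ge_exp (t : nat) :
  N * (1 - expR (- (t%:R / (expR 1 * N))) / 2) <= expected_onemax R n t.
Proof.
set r := (expR 1 * N)^-1.
have eN1 : 1 <= expR 1 * N.
  have e1 : 1 <= expR 1 :> R by have := expR_ge1Dx (1 : R); lra.
  have N1 : 1 <= N by rewrite ler1n.
  by have := ler_pM ler01 ler01 e1 N1; rewrite mul1r.
have r1 : r <= 1 by rewrite invf_le1 // (lt_le_trans ltr01 eN1).
have step s : N - expected_onemax R n s.+1 <= (N - expected_onemax R n s) * (1 - r).
  have linear_le k : (k <= n)%N -> N * r - r * k%:R <= drift_lb R n k.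
    by move=> kn; rewrite [r * _]mulrC -mulrBl; exact: drift_lb_ge_linear.
  by have := expected_onemaxS_ge s linear_le; lra.
have decay := geometric_recurrence r1 step t; rewrite expected_onemax0 in decay.
have pow_le : (1 - r) ^+ t <= expR (- (t%:R / (expR 1 * N))).
  rewrite -/r -mulrN expRM_natl lerXn2r ?nnegrE ?expR_ge0 ?expR_ge1Dx //.
  by rewrite subr_ge0.
by have := ler_wpM2l (divr_ge0 (ltW N_gt0) (ler0n R 2)) pow_le; lra.
Qed.

End DriftBounds.

Section Tangent.
Variables (R : realType) (n : nat).
Hypothesis n2 : (2 <= n)%N.
Local Notation N := (n%:R : R).
Local Notation q := (1 - N^-1).
Local Notation m := (n %/ 2)%N.
Local Notation M := ((n %/ 2)%:R : R).
Local Notation c := (q ^+ m * ((N - M) / N)).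
Local Notation al := (q ^+ m * (2 * N - M) / N / N).
Local Notation E := (expected_onemax R n).

Let n0 : (0 < n)%N. Proof. exact: leq_trans n2. Qed.
Let N2 : 2 <= N. Proof. by rewrite ler_nat. Qed.
Let N_gt0 : 0 < N. Proof. by rewrite ltr0n. Qed.

Let M_bounds : 2 * M <= N <= 2 * M + 1.
Proof.
rewrite -natrM natr1 !ler_nat.
by have := divn_eq n 2; have := ltn_pmod n (isT : (0 < 2)%N); lia.
Qed.

Let qm01 : 0 <= q ^+ m <= 1.
Proof.
have invN01 : 0 <= N^-1 <= 1 by rewrite invr_ge0 ltW //= invf_le1 // ler1n.
have q01 : 0 <= q <= 1 by lra.
by case/andP: q01 => q0 q1; rewrite exprn_ge0 ?exprn_ile1.
Qed.

Lemma tangent_slope_bounds : 0 <= al <= 2 / N.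
Proof.
have [qm0 qm1] := andP qm01; have [M2 _] := andP M_bounds.
have M0 : 0 <= M by rewrite ler0n.
have slope0 : 0 <= (2 * N - M) / N / N.
  by rewrite !divr_ge0 ?(ltW N_gt0) //; have := N_gt0; lra.
have slope_le : (2 * N - M) / N / N <= 2 / N.
  have -> : (2 * N - M) / N / N = 2 / N - M / N / N by field; rewrite gt_eqF.
  by have := divr_ge0 (divr_ge0 M0 (ltW N_gt0)) (ltW N_gt0); lra.
have -> : al = q ^+ m * ((2 * N - M) / N / N) by rewrite !mulrA.
by rewrite mulr_ge0 //= (le_trans (ler_piMl slope0 qm1) slope_le).
Qed.

Lemma tangent_value_bounds : 0 <= c <= 1.
Proof.
have [qm0 qm1] := andP qm01; have [M2 _] := andP M_bounds.
have M0 : 0 <= M := ler0n R _.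
have NM0 : 0 <= (N - M) / N by apply: divr_ge0; [lra | exact: ltW N_gt0].
have NM1 : (N - M) / N <= 1 by rewrite ler_pdivrMr ?N_gt0 // mul1r gerBl.
by rewrite mulr_ge0 //= mulr_ile1.
Qed.

Lemma tangent_value_ge : expR (- (1/2)) / 2 - N^-1 <= c.
Proof.
have [M2 _] := andP M_bounds.
have N1 : 0 < N - 1 by have := N2; lra.
set a := (N - 1)^-1.
have a0 : 0 <= a by rewrite invr_ge0 ltW.
have Na : N * a = 1 + a by rewrite /a; field; rewrite gt_eqF.
have a1 : a <= 1 by have := ler_wpM2r a0 N2; lra.
have a_le : a <= 2 / N by rewrite ler_pdivlMr // mulrC Na; lra.
have qm : expR (- (1/2)) * (1 - a / 2) <= q ^+ m.
  have u01 : 0 <= N^-1 < 1 by rewrite invr_ge0 ltW //= invf_lt1 ?N_gt0 // ltr1n.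
  apply: le_trans (expR_le_expr_1B m u01).
  have -> : N^-1 / (1 - N^-1) = a by rewrite /a; field; rewrite !gt_eqF.
  apply: le_trans (_ : expR (- (1/2)) * expR (- (a / 2)) <= _).
    by rewrite ler_wpM2l ?expR_ge0 ?expR_ge1Dx.
  rewrite -expRD ler_expR.
  by have := ler_wpM2r a0 M2; lra.
have half : 1/2 <= (N - M) / N by rewrite ler_pdivlMr //; lra.
have e0 : 0 <= expR (- (1/2)) :> R := expR_ge0 _.
have e1 : expR (- (1/2)) <= 1 :> R by rewrite expR_le1; lra.
have ea_le : expR (- (1/2)) * a <= a by rewrite ler_piMl.
have e_1a : 0 <= expR (- (1/2)) * (1 - a / 2).
  by rewrite mulr_ge0 //; lra.
have half0 : 0 <= 1/2 :> R by lra.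
by have := ler_pM e_1a half0 qm half; lra.
Qed.

Lemma expected_onemax_tangent_step (s : nat) : E s + c - al * (E s - M) <= E s.+1.
Proof.
have tangent_le k : (k <= n)%N -> c + al * M - al * k%:R <= drift_lb R n k.
  by move=> kn; rewrite -addrA -mulrBr -(opprB k%:R) mulrN; exact: drift_lb_ge_tangent.
by have := expected_onemaxS_ge s tangent_le; lra.
Qed.

Lemma expected_onemax_ge_quadratic (t : nat) :
  N / 2 + t%:R * (expR (- (1/2)) / 2) - 4 * t%:R ^+ 2 / N <= E t.
Proof.
have [al0 al_le] := andP tangent_slope_bounds.
have [c0 c1] := andP tangent_value_bounds.
have c_ge := tangent_value_ge.
have [M2 M2'] := andP M_bounds.
have invN : N^-1 <= 2^-1 by rewrite lef_pV2 ?posrE ?ltr0n.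
have al1 : al <= 1 by lra.
have c2 : c <= 2 by lra.
have MB : M <= N / 2 by lra.
have E0 : N / 2 <= E 0 by rewrite expected_onemax0.
have rec := drift_recurrence_lb al0 al1 c0 c2 MB E0 expected_onemax_tangent_step t.
set T := (t%:R : R) in rec *.
have T0 : 0 <= T := ler0n R t.
have TT : T <= T ^+ 2.
  by rewrite /T -natrX ler_nat; case: (t) => // k; rewrite leq_pmulr.
have f1 := ler_wpM2l T0 c_ge.
have f2 : al * T * (N / 2 - M) <= al * T / 2.
  by apply: ler_wpM2l; [exact: mulr_ge0 | lra].
have f3 := ler_wpM2r T0 al_le.
have f4 := ler_wpM2r (exprn_ge0 2 T0) al_le.
have invN0 : 0 <= N^-1 by rewrite invr_ge0 ltW.
have f5 := ler_wpM2r invN0 TT.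
lra.
Qed.

End Tangent.

Lemma inv_sqrt_e (R : realType) : (2 * Num.sqrt (expR 1 : R))^-1 = expR (- (1/2)) / 2.
Proof.
have -> : expR 1 = expR (1/2 : R) ^+ 2 by rewrite -expRM_natl; congr expR; field.
by rewrite sqrtr_sqr ger0_norm ?expR_ge0 // expRN invfM mulrC.
Qed.

Section Asymptotics.
Variable R : realType.
Local Notation h := (expR (- (1/2)) / 2 : R).

Lemma expected_onemax_sqrt_regime (t : nat -> nat) :
  (exists C : R, \forall n \near \oo, (t n)%:R <= C * Num.sqrt (n%:R : R)) ->
  exists K : R, \forall n \near \oo,
    n%:R / 2 + (t n)%:R / (2 * Num.sqrt (expR 1)) - K <= expected_onemax R n (t n).
Proof.
move=> [C t_le]; exists (4 * C ^+ 2); near=> n.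
have n2 : (2 <= n)%N by near: n; exact: nbhs_infty_ge.
have tn_le : (t n)%:R <= C * Num.sqrt (n%:R : R) by near: n; exact: t_le.
have N0 : 0 < (n%:R : R) by rewrite ltr0n (leq_trans _ n2).
apply: le_trans (expected_onemax_ge_quadratic _ n2 (t n)).
rewrite /(_ / _) inv_sqrt_e lerD2l lerN2 -mulrA ler_wpM2l // ler_pdivrMr //.
have -> : C ^+ 2 * n%:R = (C * Num.sqrt (n%:R : R)) ^+ 2.
  by rewrite exprMn sqr_sqrtr // ler0n.
by rewrite ler_pM ?ler0n.
Unshelve. all: by end_near.
Qed.

Lemma expected_onemax_sublinear_regime (t : nat -> nat) :
  (fun n => (t n)%:R / (n%:R : R)) @ \oo --> 0 ->
  exists eps : nat -> R, eps @ \oo --> 0 /\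
    \forall n \near \oo,
      n%:R / 2 + (t n)%:R / (2 * Num.sqrt (expR 1)) * (1 - eps n)
      <= expected_onemax R n (t n).
Proof.
move=> t_small; have h0 : 0 < h by rewrite divr_gt0 ?expR_gt0.
exists (fun n => 4 / h * ((t n)%:R / n%:R)); split.
  by have := cvgMl_tmp (a := 4 / h) t_small; rewrite mulr0; apply.
near=> n.
have n2 : (2 <= n)%N by near: n; exact: nbhs_infty_ge.
have N0 : 0 < (n%:R : R) by rewrite ltr0n (leq_trans _ n2).
apply: le_trans (expected_onemax_ge_quadratic _ n2 (t n)).
rewrite /(_ / _) inv_sqrt_e le_eqVlt; apply/orP; left; apply/eqP.
by field; rewrite !gt_eqF.
Unshelve. all: by end_near.
Qed.

End Asymptotics.

Theorem theorem7 (R : realType) :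
  (* t = O(sqrt n)  ==>  E[V_t] >= n/2 + t/(2 sqrt e) - O(1) *)
  (forall t : nat -> nat,
     (exists C : R, \forall n \near \oo, (t n)%:R <= C * Num.sqrt (n%:R : R)) ->
     exists K : R, \forall n \near \oo,
       (n%:R / 2 + (t n)%:R / (2 * Num.sqrt (expR 1)) - K
          <= expected_onemax R n (t n))) /\
  (* t = o(n)  ==>  E[V_t] >= n/2 + t/(2 sqrt e) (1 - o(1)) *)
  (forall t : nat -> nat,
     (fun n => (t n)%:R / (n%:R : R)) @ \oo --> 0 ->
     exists eps : nat -> R, eps @ \oo --> 0 /\
       \forall n \near \oo,
         (n%:R / 2 + (t n)%:R / (2 * Num.sqrt (expR 1)) * (1 - eps n)
            <= expected_onemax R n (t n))) /\
  (* for all t >= 0: E[V_t] >= n (1 - exp(-t/(e n))/2) *)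
  (forall n t : nat, (0 < n)%N ->
     (n%:R * (1 - expR (- (t%:R / (expR 1 * n%:R))) / 2)
        <= expected_onemax R n t)).
Proof.
split; [|split].
- exact: expected_onemax_sqrt_regime.
- exact: expected_onemax_sublinear_regime.
- by move=> n t n0; exact: expected_onemax_ge_exp.
Qed.
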